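(* Let $\mathbb{Z} = \langle g\rangle$ act freely and cospecially on a CAT(0) cube complex $X$ by combinatorial isometries. For every vertices $x,y\in \mathrm{Min}(g)$, there exists a unique bijection between $\mathrm{Sep}(x\mid gx)$ and $\mathrm{Sep}(y\mid gy)$ which maps each hyperplane to a hyperplane in the same $\langle g\rangle$-orbit.
   Context: $\mathrm{Sep}(A\mid B)$ denotes the set of hyperplanes separating $A$ from $B$. $\mathrm{Min}(g)$ is the subcomplex spanned by the vertices $x$ minimizing the combinatorial distance $d(x,gx)$. An action is cospecial if the quotient cube complex is special in the sense of Haglund–Wise. *)

(* A CAT(0) cube complex is encoded by its 1-skeleton, a median graph
   (Chepoi / Roller: 1-skeleta of CAT(0) cube complexes are exactly the
   median graphs, and the cube complex is recovered as the cube completion). *)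
From mathcomp Require Import all_boot.
From Stdlib Require Import Relations.Relation_Operators.

Set Implicit Arguments.
Unset Strict Implicit.
Unset Printing Implicit Defensive.

Section Defs.
Variables (V : Type) (adj : V -> V -> Prop).

Inductive walk : V -> V -> nat -> Prop :=
| walk0 x : walk x x 0
| walkS x y z n : adj x y -> walk y z n -> walk x z n.+1.

Definition is_dist (x y : V) (n : nat) : Prop :=
  walk x y n /\ forall m, walk x y m -> n <= m.

Definition between (x m y : V) : Prop :=
  exists a b, is_dist x m a /\ is_dist m y b /\ is_dist x y (a + b).

Definition median_graph : Prop :=
  [/\ (forall x y, adj x y -> adj y x),
      (forall x, ~ adj x x),
      (forall x y, exists n, walk x y n) &
      (forall x y z, exists! m, [/\ between x m y, between y m z & between x m z])].

(* a-b-d-c-a is a square: the edge (a,b) is opposite to (c,d) *)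
Definition sq (a b c d : V) : Prop :=
  [/\ adj a b, adj c d, adj a c, adj b d & (a <> d /\ b <> c)].

Definition ostep (e f : V * V) : Prop := sq e.1 e.2 f.1 f.2.
Definition ustep (e f : V * V) : Prop := ostep e f \/ f = (e.2, e.1).

Definition opar : V * V -> V * V -> Prop := clos_refl_sym_trans _ ostep.
Definition upar : V * V -> V * V -> Prop := clos_refl_sym_trans _ ustep.

(* the hyperplane dual to the edge e, as its set of (oriented) dual edges *)
Definition hyperplane_of (e : V * V) : V -> V -> Prop :=
  fun x y => adj x y /\ upar e (x, y).

Definition is_hyperplane (J : V -> V -> Prop) : Prop :=
  exists a b, adj a b /\ J = hyperplane_of (a, b).

(* J separates x and y: x and y lie in different components of X minus J,
   i.e. there is no edge path from x to y avoiding the edges dual to J *)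
Definition separates (J : V -> V -> Prop) (x y : V) : Prop :=
  ~ clos_refl_trans _ (fun u v => adj u v /\ ~ J u v) x y.

Definition Sep (x y : V) : Type :=
  {J : V -> V -> Prop | is_hyperplane J /\ separates J x y}.

Variable g : V -> V.

Definition automorphism : Prop :=
  bijective g /\ forall x y, adj x y <-> adj (g x) (g y).

Definition free_action : Prop := forall n x, 0 < n -> iter n g x <> x.

Definition gE (n : nat) (e : V * V) : V * V := (iter n g e.1, iter n g e.2).

(* the (unoriented) hyperplanes dual to e and f are in the same <g>-orbit,
   i.e. e and f are dual to the same hyperplane of X/<g> *)
Definition same_orbit_edge (e f : V * V) : Prop :=
  exists n, upar (gE n e) f \/ upar (gE n f) e.

Definition spans (v a b : V) : Prop :=
  [/\ adj v a, adj v b, a <> b & exists c, adj a c /\ adj b c /\ c <> v].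

(* X/<g> is special in the sense of Haglund-Wise, expressed in X *)
Definition cospecial : Prop :=
  [/\ (* hyperplanes of the quotient are 2-sided *)
      (forall a b n, adj a b -> ~ opar (gE n (a, b)) (b, a)),
      (* no self-intersecting hyperplane *)
      (forall p q r, spans p q r -> ~ same_orbit_edge (p, q) (p, r)),
      (* no directly self-osculating hyperplane *)
      (forall v a b n, adj v a -> adj v b -> a <> b -> ~ spans v a b ->
          ~ opar (gE n (v, a)) (v, b)) &
      (* no pair of interosculating hyperplanes *)
      (forall p q r v a b, spans p q r -> adj v a -> adj v b -> a <> b ->
          ~ spans v a b ->
          ~ (same_orbit_edge (p, q) (v, a) /\ same_orbit_edge (p, r) (v, b)))].

Definition in_Min (x : V) : Prop :=
  exists n, is_dist x (g x) n /\ forall z m, is_dist z (g z) m -> n <= m.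

Definition hyp_image (n : nat) (J : V -> V -> Prop) : V -> V -> Prop :=
  fun x y => exists a b, J a b /\ x = iter n g a /\ y = iter n g b.

Definition same_orbit_hyp (J J' : V -> V -> Prop) : Prop :=
  exists n, J' = hyp_image n J \/ J = hyp_image n J'.

End Defs.

(* Hyperplanes are handled through halfspaces of the median graph: the
   hyperplane dual to an edge ab separates u from v exactly when u and v lie on
   different sides of d(-, a) < d(-, b), and a geodesic from u to v crosses every
   hyperplane of Sep(u|v) exactly once, so |Sep(u|v)| = d(u, v).

   Let x be in Min(g). No hyperplane H separates both x|gx and gx|g^2x:
   otherwise, by minimality, the whole <g>-orbit of H would lie in the finite
   set Sep(x|gx), so H would have a finite orbit. Translates never cross (no
   self-intersection), so their sides containing x are nested, and g reverses
   this nesting; an extremal translate Y then satisfies g^2 Y = Y. Now gY = Y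
   contradicts 2-sidedness, while gY <> Y yields a g-invariant convex region
   whose gate p from x has d(p, gp) < d(x, gx).
   Consequently the translates g^i H of H in Sep(x|gx) are nested, and g^i H
   separates x from g^n x iff i < n. Comparing the orbits of x and y shows that
   each <g>-orbit meeting Sep(x|gx) meets Sep(y|gy), and meets it at most once;
   this correspondence is the bijection, and it is the only orbit-preserving
   one. *)

From mathcomp Require Import all_boot zify.
From Stdlib Require Import Relations.Relation_Operators Classical.
From Stdlib Require Import FunctionalExtensionality PropExtensionality.
From Stdlib Require Import ProofIrrelevance ClassicalEpsilon.
From Stdlib Require List.

Set Implicit Arguments.
Unset Strict Implicit.
Unset Printing Implicit Defensive.

Local Arguments rst_trans {A R x y z} _ _.
Local Arguments rst_sym {A R x y} _.
Local Arguments rt_trans {A R x y z} _ _.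

Lemma ex_min_nat (P : nat -> Prop) :
  (exists n, P n) -> exists n, P n /\ forall m, P m -> n <= m.
Proof.
case=> n; elim/ltn_ind: n => n IH Pn.
have [[m [ltmn Pm]]|no_smaller] := classic (exists m, m < n /\ P m).
  exact: IH Pm.
exists n; split=> // m Pm; rewrite leqNgt; apply/negP => ltmn.
by apply: no_smaller; exists m.
Qed.

Lemma clos_rt_sym (A : Type) (R : A -> A -> Prop) :
  (forall s t, R s t -> R t s) ->
  forall u v, clos_refl_trans A R u v -> clos_refl_trans A R v u.
Proof.
move=> symR u v; elim=> [s t Rst|s|s t w _ IH1 _ IH2].
- exact/rt_step/symR.
- exact: rt_refl.
- exact: rt_trans IH2 IH1.
Qed.

Lemma clos_rt_mono (A : Type) (R R' : A -> A -> Prop) :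
  (forall s t, R s t -> R' s t) ->
  forall u v, clos_refl_trans A R u v -> clos_refl_trans A R' u v.
Proof.
move=> subR u v; elim=> [s t Rst|s|s t w _ IH1 _ IH2].
- exact/rt_step/subR.
- exact: rt_refl.
- exact: rt_trans IH1 IH2.
Qed.

Lemma clos_rst_change_step (A : Type) (R : A -> A -> Prop) (P : A -> Prop) e0 x y :
  clos_refl_sym_trans A R x y -> clos_refl_sym_trans A R e0 x -> ~ (P x <-> P y) ->
  exists x' y', [/\ clos_refl_sym_trans A R e0 x', R x' y' \/ R y' x', P x' & ~ P y'].
Proof.
elim=> {x y} [x y Rxy|x|x y Rxy IH|x y z Rxy IH1 _ IH2] e0x HP.
- have [Px|nPx] := classic (P x).
    by exists x, y; split=> //; [left | tauto].
  exists y, x; split; [exact: rst_trans e0x (rst_step _ _ _ _ Rxy)|by right|tauto|done].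
- by case: HP.
- by apply: IH; [exact: rst_trans e0x (rst_sym Rxy) | tauto].
- have e0y := rst_trans e0x Rxy.
  have [Pxy|nPxy] := classic (P x <-> P y); last exact: IH1.
  by apply: IH2 e0y _; tauto.
Qed.

Lemma nodup_map_iota (A : Type) (f : nat -> A) n :
  (forall i j, i < j -> j < n -> f i <> f j) -> List.NoDup (List.map f (List.seq 0 n)).
Proof.
suff gen a : (forall i j, a <= i -> i < j -> j < a + n -> f i <> f j) ->
             List.NoDup (List.map f (List.seq a n)).
  by move=> Hf; apply: gen => i j _; apply: Hf.
elim: n a => [|n IH] a Hf /=; first exact: List.NoDup_nil.
apply: List.NoDup_cons.
  by case/List.in_map_iff=> k [Ek /List.in_seq Hk]; apply: (Hf a k) => //; lia.
by apply: IH => i j Hi Hij Hj; apply: Hf => //; lia.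
Qed.

Lemma list_least (A : Type) (R : A -> A -> Prop) (l : list A) a0 :
  List.In a0 l -> (forall a b, List.In a l -> List.In b l -> R a b \/ R b a) ->
  (forall a b c, R a b -> R b c -> R a c) -> (forall a, R a a) ->
  exists m, List.In m l /\ forall b, List.In b l -> R m b.
Proof.
move=> + total trans refl; elim: l a0 total => [|a l IH] a0 //= total.
case: l IH total => [|b l] IH total _.
  by exists a; split; [left | move=> c [<-|[]]].
have [m [lm mmin]] := IH b (fun x y lx ly => total x y (or_intror lx) (or_intror ly))
                         (or_introl erefl).
have [Ram|Rma] := total a m (or_introl erefl) (or_intror lm).
- by exists a; split=> [|c [<-|lc]]; [left | | apply: trans Ram (mmin c lc)].
- by exists m; split=> [|c [<-|lc]]; [right | | apply: mmin].
Qed.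

Section MedianGraph.
Variables (V : Type) (adj : V -> V -> Prop).
Hypothesis HX : median_graph adj.

Lemma adj_sym x y : adj x y -> adj y x. Proof. by case: HX => + _ _ _; apply. Qed.
Lemma adj_irrefl x : ~ adj x x. Proof. by case: HX. Qed.

Lemma walk_cat x y z m n : walk adj x y m -> walk adj y z n -> walk adj x z (m + n).
Proof. by elim=> // a b c k ab _ IH /IH; rewrite addSn; apply: walkS. Qed.

Lemma walk_rcons x y z n : walk adj x y n -> adj y z -> walk adj x z n.+1.
Proof. by move=> xy yz; rewrite -addn1; apply: walk_cat xy (walkS yz (walk0 _ _)). Qed.

Lemma walk_rev x y n : walk adj x y n -> walk adj y x n.
Proof. by elim=> [a|a b c k ab _ IH]; [apply: walk0 | apply: walk_rcons IH (adj_sym ab)]. Qed.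

Lemma walk0_eq x y : walk adj x y 0 -> x = y.
Proof. by move=> w; inversion w. Qed.

Lemma walkS_inv x z n : walk adj x z n.+1 -> exists y, adj x y /\ walk adj y z n.
Proof. by move=> w; inversion w; subst; exists y. Qed.

Definition dist x y : nat :=
  let: exist n _ := constructive_indefinite_description _
    (ex_min_nat (match HX with And4 _ _ conn _ => conn x y end)) in n.

Lemma dist_spec x y : is_dist adj x y (dist x y).
Proof. by rewrite /dist; case: constructive_indefinite_description => n []. Qed.

Lemma dist_walk x y : walk adj x y (dist x y). Proof. by case: (dist_spec x y). Qed.
Lemma dist_min x y n : walk adj x y n -> dist x y <= n.
Proof. by case: (dist_spec x y) => _; apply. Qed.

Lemma is_distE x y n : is_dist adj x y n -> n = dist x y.
Proof. by case=> w nmin; have := nmin _ (dist_walk x y); have := dist_min w; lia. Qed.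

Lemma distC x y : dist x y = dist y x.
Proof.
have := dist_min (walk_rev (dist_walk x y)).
by have := dist_min (walk_rev (dist_walk y x)); lia.
Qed.

Lemma dist_triangle x y z : dist x z <= dist x y + dist y z.
Proof. exact/dist_min/walk_cat/dist_walk/dist_walk. Qed.

Lemma dist0 x : dist x x = 0. Proof. by have := dist_min (walk0 adj x); lia. Qed.

Lemma dist_eq0 x y : dist x y = 0 -> x = y.
Proof. by move=> d0; apply: walk0_eq; rewrite -d0; apply: dist_walk. Qed.

Lemma dist_adj x y : adj x y -> dist x y = 1.
Proof.
move=> xy; have := dist_min (walkS xy (walk0 _ y)).
case E: (dist x y) => [|[|//]] // _.
by move: xy; rewrite (dist_eq0 E) => /adj_irrefl.
Qed.

Lemma dist1_adj x y : dist x y = 1 -> adj x y.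
Proof. by move=> d1; have := dist_walk x y; rewrite d1 => /walkS_inv [z [xz /walk0_eq <-]]. Qed.

Lemma dist_adj_le x y z : adj y z -> dist x z <= (dist x y).+1.
Proof. by move=> yz; have := dist_triangle x y z; rewrite (dist_adj yz) addn1. Qed.

Lemma dist_adj_le2 x y z : adj y z -> dist z x <= (dist y x).+1.
Proof. by move=> yz; rewrite distC [dist y x]distC; apply: dist_adj_le. Qed.

Definition interval x m y := dist x m + dist m y = dist x y.

Lemma between_interval x m y : between adj x m y <-> interval x m y.
Proof.
split=> [[a [b [/is_distE-> [/is_distE-> /is_distE]]]] //|xmy].
by exists (dist x m), (dist m y); rewrite xmy; split; [|split]; apply: dist_spec.
Qed.

Definition median_of x y z m := [/\ interval x m y, interval y m z & interval x m z].

Lemma median_exists x y z : exists m, median_of x y z m.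
Proof.
case: HX => _ _ _ /(_ x y z) [m [[xmy ymz xmz] _]].
by exists m; split; apply/between_interval.
Qed.

Lemma median_unique x y z m1 m2 : median_of x y z m1 -> median_of x y z m2 -> m1 = m2.
Proof.
case: HX => _ _ _ /(_ x y z) [m [_ uniq]].
have med_between w : median_of x y z w ->
    [/\ between adj x w y, between adj y w z & between adj x w z].
  by case; rewrite -!between_interval.
by move=> /med_between/uniq <- /med_between/uniq <-.
Qed.

Lemma dist_edge a b z : adj a b -> dist z b = (dist z a).+1 \/ dist z a = (dist z b).+1.
Proof.
move=> ab; have [m [zma amb zmb]] := median_exists z a b.
have dab := dist_adj ab; have dba := dist_adj (adj_sym ab).
move: zma amb zmb; rewrite /interval.
case E1: (dist a m) => [|k]; first by rewrite -(dist_eq0 E1); lia.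
by case E2: (dist m b) => [|k']; [rewrite (dist_eq0 E2) distC; lia | lia].
Qed.

Lemma dist_two_neighbours p q r : adj p q -> adj p r -> q <> r -> dist q r = 2.
Proof.
move=> pq pr qr; have := dist_triangle q p r.
have := (dist_adj pq, dist_adj pr, distC q p).
case E: (dist q r) => [|[|k]] [[dpq dpr] dqp] le2; last lia.
- by case: qr; apply: dist_eq0.
- by have := dist_edge p (dist1_adj E); lia.
Qed.

Lemma quadrangle u x y z k : dist u x = k -> dist u y = k -> adj x z -> adj y z -> x <> y ->
  exists w, [/\ adj x w, adj y w & (dist u w).+1 = k].
Proof.
move=> ux uy xz yz xy.
have dxy := dist_two_neighbours (adj_sym xz) (adj_sym yz) xy.
have [m [xmy ymu xmu]] := median_exists x y u.
move: xmy ymu xmu; rewrite /interval dxy.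
have := (distC y x, distC x u, distC y u) => -[[yx xu yu]].
case E1: (dist x m) => [|k1]; first by rewrite -(dist_eq0 E1); lia.
case E2: (dist m y) => [|k2]; first by rewrite (dist_eq0 E2) distC; lia.
move=> sum2 ymu xmu; exists m; split.
- by apply: dist1_adj; lia.
- by apply: dist1_adj; rewrite distC; lia.
- by rewrite distC; lia.
Qed.

Definition halfspace a b z := dist z a < dist z b.

Lemma halfspaceNC a b z : adj a b -> ~ halfspace a b z <-> halfspace b a z.
Proof. by move=> ab; rewrite /halfspace; have := dist_edge z ab; split; lia. Qed.

Lemma halfspace_edge a b : adj a b -> halfspace a b a /\ ~ halfspace a b b.
Proof. by move=> ab; rewrite /halfspace !dist0 (dist_adj ab) (dist_adj (adj_sym ab)). Qed.

Lemma crossing_edge_dists a b u v : adj a b -> adj u v -> halfspace a b u -> ~ halfspace a b v ->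
  [/\ dist v a = (dist u a).+1, dist u b = (dist u a).+1 & dist v b = dist u a].
Proof.
rewrite /halfspace => ab uv hu hv.
have := (dist_edge u ab, dist_edge v ab, dist_adj_le2 a uv, dist_adj_le2 a (adj_sym uv)).
have := (dist_adj_le2 b uv, dist_adj_le2 b (adj_sym uv)).
by case=> ? ? [[[? ?] ?] ?]; split; lia.
Qed.

(* Induction on d(u, a): the quadrangle condition closes a square on uv
   whose opposite edge is nearer to ab. *)
Lemma crossing_edge_opar a b u v : adj a b -> adj u v ->
  halfspace a b u -> ~ halfspace a b v -> opar adj (a, b) (u, v).
Proof.
move=> ab; move: {2}(dist u a) (leqnn (dist u a)) => n.
elim: n u v => [|n IH] u v un uv hu hv;
  have [dva dub dvb] := crossing_edge_dists ab uv hu hv;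
  case E: (dist u a) un dva dub dvb => [|k] un dva dub dvb; try lia.
1,2: by move/dist_eq0: E => <-; move/dist_eq0: dvb => <-; apply: rst_refl.
have [u' [uu' wu'a]] := walkS_inv (eq_ind _ _ (dist_walk u a) _ E).
have u'a : dist u' a = k by have := dist_min wu'a; have := dist_adj_le2 a (adj_sym uu'); lia.
have u'b : dist u' b = k.+1.
  by have := (dist_adj_le2 b (adj_sym uu'), dist_triangle u' a b, dist_adj ab) => -[[]]; lia.
have vu' : v <> u' by move=> e; subst; lia.
have [w [vw u'w wb]] :=
  quadrangle (etrans (distC b v) dvb) (etrans (distC b u') u'b) (adj_sym uv) (adj_sym uu') vu'.
rewrite distC in wb.
have wa : dist w a = k.+1.
  by have := (dist_adj_le2 a u'w, dist_adj_le2 a (adj_sym vw)) => -[]; lia.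
have hu' : halfspace a b u' by rewrite /halfspace; lia.
have nhw : ~ halfspace a b w by rewrite /halfspace; lia.
apply: rst_trans (IH u' w (ltac:(lia)) u'w hu' nhw) _; apply/rst_sym/rst_step.
by split=> //=; split=> e; subst; lia.
Qed.

(* If r were on the b-side as well, then depending on d(a, s) either q and r
   would both be medians of p, s and a common neighbour w of q, r nearer to b,
   or p and s would both be medians of q, r, a. *)
Lemma square_side a b p q r s : adj a b -> sq adj p q r s ->
  halfspace a b p -> ~ halfspace a b q -> halfspace a b r.
Proof.
move=> ab [pq rs pr qs [ps qr]] hp hq; apply: NNPP => hr.
have [dqa dpb dqb] := crossing_edge_dists ab pq hp hq.
have [dra _ drb] := crossing_edge_dists ab pr hp hr.
have dqr := dist_two_neighbours pq pr qr.
have := (dist_adj pq, dist_adj qs, dist_adj pr, dist_adj rs).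
have := (dist_adj (adj_sym pq), dist_adj (adj_sym pr)).
have := (dist_adj (adj_sym qs), dist_adj (adj_sym rs)).
move=> [dsq dsr] [dqp drp] [[[dpq dqs] dpr] drs]; have drq := distC r q.
have [|] := dist_edge a qs; rewrite !(distC a) => dsa.
- have dbq : dist b q = dist p a by rewrite distC.
  have dbr : dist b r = dist p a by rewrite distC.
  have [w [qw rw wb]] := quadrangle dbq dbr (adj_sym pq) (adj_sym pr) qr.
  rewrite distC in wb.
  have pw : p <> w by move=> e; subst; lia.
  have dsb : dist s b = (dist p a).+1.
    have := (dist_edge b qs, dist_triangle s b a, dist_adj (adj_sym ab), distC b s, distC b q).
    by move=> [[[[]]]]; lia.
  have sw : s <> w by move=> e; subst; lia.
  have := (dist_two_neighbours (adj_sym pq) qs ps, dist_two_neighbours (adj_sym pq) qw pw).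
  have := (dist_two_neighbours qs qw sw, dist_adj qw, dist_adj rw).
  have := (distC s w, distC p w, distC p s).
  move=> [[dws dwp] dsp] [[dsw dqw] drw] [dps dpw].
  by apply: qr; apply: (@median_unique p s w); split; rewrite /interval; lia.
- apply: ps; apply: (@median_unique q r a); split; rewrite /interval; lia.
Qed.

Lemma sq_rev p q r s : sq adj p q r s -> sq adj q p s r.
Proof. by case=> pq rs pr qs [ps qr]; split=> //; apply: adj_sym. Qed.

Lemma sq_sym p q r s : sq adj p q r s -> sq adj r s p q.
Proof.
case=> pq rs pr qs [ps qr]; split=> //; try exact: adj_sym.
by split=> e; [apply: qr | apply: ps].
Qed.

Definition crosses a b (e : V * V) :=
  halfspace a b e.1 /\ ~ halfspace a b e.2 \/ ~ halfspace a b e.1 /\ halfspace a b e.2.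

Lemma crossesE a b u v : crosses a b (u, v) <-> ~ (halfspace a b u <-> halfspace a b v).
Proof.
rewrite /crosses /=.
by case: (classic (halfspace a b u)); case: (classic (halfspace a b v)); tauto.
Qed.

Lemma ostep_crosses a b e f : adj a b -> ostep adj e f -> crosses a b e -> crosses a b f.
Proof.
case: e f => p q [r s] ab; rewrite /ostep /crosses /= => pqrs.
have sq' := sq_rev pqrs; have ba := adj_sym ab.
have C z : ~ halfspace a b z <-> halfspace b a z := halfspaceNC z ab.
case=> [[hp hq]|[hp hq]].
- left; split; first exact: square_side ab pqrs hp hq.
  by move: (C p) (C q) (C s) (square_side ba sq'); tauto.
- right; split; last exact: square_side ab sq' hq hp.
  by move: (C p) (C q) (C r) (square_side ba pqrs); tauto.
Qed.

Lemma upar_crosses a b e f : adj a b -> upar adj e f -> (crosses a b e <-> crosses a b f).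
Proof.
move=> ab; elim=> {e f} [e f [ef|->]|e|e f _ IH|e f h _ IH1 _ IH2] //.
- split; first exact: ostep_crosses.
  by apply: ostep_crosses ab _; case: e f ef => ? ? [? ?]; apply: sq_sym.
- by rewrite /crosses /=; tauto.
- by rewrite IH.
- by rewrite IH1.
Qed.

Lemma opar_upar e f : opar adj e f -> upar adj e f.
Proof.
elim=> {e f} [e f ef|e|e f _ IH|e f h _ IH1 _ IH2].
- by apply: rst_step; left.
- exact: rst_refl.
- exact: rst_sym.
- exact: rst_trans IH2.
Qed.

Lemma opar_rev e f : opar adj e f -> opar adj (e.2, e.1) (f.2, f.1).
Proof.
elim=> {e f} [[p q] [r s] ef|e|e f _ IH|e f h _ IH1 _ IH2].
- exact/rst_step/sq_rev.
- exact: rst_refl.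
- exact: rst_sym.
- exact: rst_trans IH2.
Qed.

Lemma upar_rev e : upar adj e (e.2, e.1).
Proof. by apply: rst_step; right. Qed.

Lemma hyperplane_of_crosses a b u v :
  adj a b -> hyperplane_of adj (a, b) u v -> crosses a b (u, v).
Proof. by move=> ab [_ /(upar_crosses ab) <-]; left; apply: halfspace_edge. Qed.

Lemma crosses_hyperplane_of a b u v :
  adj a b -> adj u v -> crosses a b (u, v) -> hyperplane_of adj (a, b) u v.
Proof.
move=> ab uv cr; split=> //; case: cr => [[hu hv]|[hu hv]].
- exact/opar_upar/crossing_edge_opar.
- apply: rst_trans (opar_upar (crossing_edge_opar ab (adj_sym uv) hv hu)) _.
  exact: (upar_rev (v, u)).
Qed.

Lemma hyperplane_of_sym e s t : hyperplane_of adj e s t -> hyperplane_of adj e t s.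
Proof. by case=> st est; split; [apply: adj_sym | apply: rst_trans est (upar_rev (s, t))]. Qed.

Lemma hyperplane_of_upar e f : upar adj e f -> hyperplane_of adj e = hyperplane_of adj f.
Proof.
move=> ef; apply: functional_extensionality => s; apply: functional_extensionality => t.
apply: propositional_extensionality; split=> -[st H]; split=> //.
- exact: rst_trans (rst_sym ef) H.
- exact: rst_trans ef H.
Qed.

Lemma hyperplane_of_eq_upar e u v : adj u v ->
  hyperplane_of adj e = hyperplane_of adj (u, v) -> upar adj e (u, v).
Proof.
move=> uv E; have : hyperplane_of adj (u, v) u v by split=> //; apply: rst_refl.
by rewrite -E => -[].
Qed.

Lemma halfspace_path a b u : adj a b -> halfspace a b u ->
  clos_refl_trans _ (fun s t => adj s t /\ halfspace a b s /\ halfspace a b t) u a.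
Proof.
move=> ab; move Hn: (dist u a) => n; elim: n u Hn => [|n IH] u Hn hu.
  by rewrite (dist_eq0 Hn); apply: rt_refl.
have [u' [uu' w]] := walkS_inv (eq_ind _ _ (dist_walk u a) _ Hn).
have u'a : dist u' a = n by have := dist_min w; have := dist_adj_le2 a (adj_sym uu'); lia.
have hu' : halfspace a b u'.
  by move: hu; rewrite /halfspace; have := dist_adj_le2 b (adj_sym uu'); lia.
exact: rt_trans (rt_step _ _ _ _ (conj uu' (conj hu hu'))) (IH u' u'a hu').
Qed.

Lemma halfspace_connected a b u v : adj a b -> halfspace a b u -> halfspace a b v ->
  clos_refl_trans _ (fun s t => adj s t /\ ~ hyperplane_of adj (a, b) s t) u v.
Proof.
move=> ab hu hv.
have inside s t : adj s t /\ halfspace a b s /\ halfspace a b t ->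
                  adj s t /\ ~ hyperplane_of adj (a, b) s t.
  by case=> st [hs ht]; split=> // /(hyperplane_of_crosses ab); rewrite /crosses /=; tauto.
apply: rt_trans (clos_rt_mono inside (halfspace_path ab hu)) _.
apply: clos_rt_sym (clos_rt_mono inside (halfspace_path ab hv)).
by move=> s t [st nst]; split; [apply: adj_sym | move/hyperplane_of_sym].
Qed.

Lemma separatesE a b u v : adj a b ->
  separates adj (hyperplane_of adj (a, b)) u v <-> ~ (halfspace a b u <-> halfspace a b v).
Proof.
move=> ab; split=> [sep same|diff path]; last first.
  apply: diff; elim: path => [s t [st nst]|s|s t w _ IH1 _ IH2]; try tauto.
  by apply: NNPP => cr; apply/nst/crosses_hyperplane_of => //; apply/crossesE.
apply: sep; have [hu|hu] := classic (halfspace a b u).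
  exact: halfspace_connected ab hu (proj1 same hu).
rewrite (hyperplane_of_upar (upar_rev (a, b))).
apply: halfspace_connected (adj_sym ab) _ _; apply/(halfspaceNC _ ab); tauto.
Qed.

Lemma hyperplane_sides J : is_hyperplane adj J ->
  exists S : V -> Prop, forall u v, separates adj J u v <-> ~ (S u <-> S v).
Proof. by case=> a [b [ab ->]]; exists (halfspace a b) => u v; apply: separatesE. Qed.

Ltac add_classic P :=
  lazymatch goal with _ : P \/ ~ P |- _ => fail | _ => pose proof (classic P) end.

(* A hyperplane has two sides, so every propositional combination of
   separation facts about one hyperplane is a tautology about its sides. *)
Ltac by_sides HJ :=
  let S := fresh "S" in let HS := fresh "HS" in
  have [S HS] := hyperplane_sides HJ; clear - HS;
  lazymatch type of HS with forall u v, separates _ ?J u v <-> _ =>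
    repeat match goal with |- context [separates _ J ?u ?v] => rewrite (HS u v) end end;
  repeat match goal with |- context [S ?z] => add_classic (S z) end;
  tauto.

Lemma separates_xor J u v w : is_hyperplane adj J ->
  (separates adj J u w <-> ~ (separates adj J u v <-> separates adj J v w)).
Proof. by move=> hJ; by_sides hJ. Qed.

Lemma separates_irrefl J u : is_hyperplane adj J -> ~ separates adj J u u.
Proof. by move=> hJ; by_sides hJ. Qed.

Lemma separatesC J u v : is_hyperplane adj J -> separates adj J u v <-> separates adj J v u.
Proof. by move=> hJ; by_sides hJ. Qed.

Lemma is_hyperplane_of u w : adj u w -> is_hyperplane adj (hyperplane_of adj (u, w)).
Proof. by move=> uw; exists u, w. Qed.

Lemma separates_edge u w : adj u w -> separates adj (hyperplane_of adj (u, w)) u w.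
Proof. by move=> uw; rewrite separatesE //; have [] := halfspace_edge uw; tauto. Qed.

Lemma separating_edge_hyperplane J u w : is_hyperplane adj J -> adj u w ->
  separates adj J u w -> J = hyperplane_of adj (u, w).
Proof.
case=> a [b [ab ->]] uw; rewrite separatesE // => sep.
by have [_ /hyperplane_of_upar] := crosses_hyperplane_of ab uw (proj2 (crossesE a b u w) sep).
Qed.

Lemma hyperplane_eq_sides J1 J2 x : is_hyperplane adj J1 -> is_hyperplane adj J2 ->
  (forall z, separates adj J1 z x <-> separates adj J2 z x) -> J1 = J2.
Proof.
move=> hJ1 hJ2 same; have [a [b [ab E]]] := hJ1.
have sep2 : separates adj J2 a b.
  have sep1 : separates adj J1 a b by rewrite E; apply: separates_edge.
  move: sep1; rewrite (separates_xor a x b hJ1) (separates_xor a x b hJ2).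
  by rewrite (separatesC x b hJ1) (separatesC x b hJ2) !same.
by rewrite E (separating_edge_hyperplane hJ2 ab sep2).
Qed.

Fixpoint is_walk (u : V) (l : seq V) : Prop :=
  if l is w :: l' then adj u w /\ is_walk w l' else True.

Fixpoint dual_hyperplanes (u : V) (l : seq V) : list (V -> V -> Prop) :=
  if l is w :: l' then hyperplane_of adj (u, w) :: dual_hyperplanes w l' else nil.

Lemma walk_is_walk x y n :
  walk adj x y n -> exists l, [/\ is_walk x l, last x l = y & size l = n].
Proof.
elim=> [a|a b c k ab _ [l [wl <- <-]]]; first by exists nil.
by exists (b :: l).
Qed.

Lemma is_walk_walk x l : is_walk x l -> walk adj x (last x l) (size l).
Proof.
by elim: l x => [|w l IH] x /=; [move=> _; apply: walk0 | case=> xw /IH; apply: walkS].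
Qed.

Lemma is_walk_cat x l1 l2 : is_walk x l1 -> is_walk (last x l1) l2 -> is_walk x (l1 ++ l2).
Proof. by elim: l1 x => [|w l IH] x //= [xw wl] /(IH _ wl). Qed.

Lemma dual_hyperplanes_cat x l1 l2 :
  dual_hyperplanes x (l1 ++ l2) =
  (dual_hyperplanes x l1 ++ dual_hyperplanes (last x l1) l2)%list.
Proof. by elim: l1 x => [|w l IH] x //=; rewrite IH. Qed.

Lemma size_dual_hyperplanes x l : length (dual_hyperplanes x l) = size l.
Proof. by elim: l x => [|w l IH] x //=; rewrite IH. Qed.

Lemma geodesic_dual_hyperplanes u l : is_walk u l -> size l = dist u (last u l) ->
  [/\ List.NoDup (dual_hyperplanes u l),
      forall J, List.In J (dual_hyperplanes u l) -> is_hyperplane adj J &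
      forall J, is_hyperplane adj J ->
        separates adj J u (last u l) <-> List.In J (dual_hyperplanes u l)].
Proof.
elim: l u => [|w l IH] u /=.
  move=> _ _; split=> [|//|J hJ]; first exact: List.NoDup_nil.
  by split=> // /(separates_irrefl hJ).
set v := last w l => -[uw wl] size_l.
have wv : size l = dist w v.
  have := dist_min (is_walk_walk wl); rewrite -/v.
  by have := dist_triangle u w v; rewrite (dist_adj uw); lia.
have [nodup hyps sepL] := IH w wl wv.
have huw := is_hyperplane_of uw.
have nsep_wv : ~ separates adj (hyperplane_of adj (u, w)) w v.
  rewrite separatesE //; have [_ nhw] := halfspace_edge uw.
  have nhv : ~ halfspace u w v by rewrite /halfspace distC [dist v w]distC; lia.
  tauto.
split=> [|J [<-|/hyps]|J hJ] //.
  by apply: List.NoDup_cons => // /(sepL _ huw).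
split=> [sep|[<-|inJ]].
- have [wvJ|nwvJ] := classic (separates adj J w v); first by right; apply/sepL.
  left; apply/esym/(separating_edge_hyperplane hJ uw).
  by move: sep; rewrite (separates_xor u w v hJ); tauto.
- by rewrite (separates_xor u w v huw); have := separates_edge uw; tauto.
- have nuw : ~ separates adj J u w.
    by move=> /(separating_edge_hyperplane hJ uw) E; apply: nsep_wv; rewrite -E; apply/sepL.
  by rewrite (separates_xor u w v hJ) (sepL J hJ); tauto.
Qed.

Lemma geodesic_exists u v : exists l, [/\ is_walk u l, last u l = v & size l = dist u v].
Proof. exact: walk_is_walk (dist_walk u v). Qed.

Lemma separating_list u v : exists L : list (V -> V -> Prop),
  [/\ List.NoDup L, length L = dist u v, (forall J, List.In J L -> is_hyperplane adj J) &
      forall J, is_hyperplane adj J -> separates adj J u v <-> List.In J L].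
Proof.
have [l [wl <- size_l]] := geodesic_exists u v.
have [nodup hyps sepL] := geodesic_dual_hyperplanes wl size_l.
by exists (dual_hyperplanes u l); rewrite size_dual_hyperplanes.
Qed.

Lemma nodup_app_disjoint (A : Type) (l1 l2 : list A) a :
  List.NoDup (l1 ++ l2) -> List.In a l1 -> List.In a l2 -> False.
Proof.
elim: l1 => [|b l IH] //= /List.NoDup_cons_iff [nb nd] [<-|al] a2; last exact: IH.
by apply: nb; apply: List.in_or_app; right.
Qed.

Lemma interval_separates_once u z v J : interval u z v -> is_hyperplane adj J ->
  separates adj J u z -> separates adj J z v -> False.
Proof.
move=> uzv hJ uz zv.
have [l1 [w1 e1 s1]] := geodesic_exists u z.
have [l2 [w2 e2 s2]] := geodesic_exists z v.
have w12 : is_walk u (l1 ++ l2) by apply: is_walk_cat w1 _; rewrite e1.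
have s12 : size (l1 ++ l2) = dist u (last u (l1 ++ l2)).
  by rewrite last_cat e1 e2 size_cat s1 s2; apply: uzv.
have [nd _ _] := geodesic_dual_hyperplanes w12 s12.
rewrite dual_hyperplanes_cat e1 in nd.
have [_ _ sep1] := geodesic_dual_hyperplanes w1 (etrans s1 (congr1 _ (esym e1))).
have [_ _ sep2] := geodesic_dual_hyperplanes w2 (etrans s2 (congr1 _ (esym e2))).
apply: (nodup_app_disjoint nd (a := J)).
- by apply/(sep1 J hJ); rewrite e1.
- by apply/(sep2 J hJ); rewrite e2.
Qed.

Lemma interval_not_separated u z v J : interval u z v -> is_hyperplane adj J ->
  ~ separates adj J u v -> ~ separates adj J u z /\ ~ separates adj J z v.
Proof.
move=> uzv hJ nuv; have once := interval_separates_once uzv hJ.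
by move: nuv; rewrite (separates_xor u z v hJ); tauto.
Qed.

Lemma separating_length_le (L : list (V -> V -> Prop)) u v u' v' : List.NoDup L ->
  (forall J, List.In J L ->
     is_hyperplane adj J /\ (separates adj J u v \/ separates adj J u' v')) ->
  length L <= dist u v + dist u' v'.
Proof.
move=> nd sepL.
have [L1 [_ <- _ sep1]] := separating_list u v.
have [L2 [_ <- _ sep2]] := separating_list u' v'.
have incl : List.incl L (L1 ++ L2).
  move=> J /sepL [hJ] [/(sep1 J hJ)|/(sep2 J hJ)] inJ; apply: List.in_or_app; tauto.
by have /leP := List.NoDup_incl_length nd incl; rewrite List.length_app.
Qed.

Lemma separating_subset_eq u v u' v' :
  (forall J, is_hyperplane adj J -> separates adj J u v -> separates adj J u' v') ->
  dist u' v' <= dist u v ->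
  forall J, is_hyperplane adj J -> separates adj J u' v' -> separates adj J u v.
Proof.
move=> sub le J hJ sepJ.
have [L [ndL sizeL hL sepL]] := separating_list u v.
have [L' [_ sizeL' hL' sepL']] := separating_list u' v'.
have incl : List.incl L L'.
  by move=> K inK; have hK := hL K inK; apply/(sepL' K hK)/(sub K hK)/(sepL K hK).
have le' : (length L' <= length L)%coq_nat by apply/leP; rewrite sizeL sizeL'.
exact/(sepL J hJ)/(List.NoDup_length_incl ndL le' incl)/(sepL' J hJ).
Qed.

Definition convex (R : V -> Prop) := forall z1 z2 w, R z1 -> R z2 -> interval z1 w z2 -> R w.

Lemma gate_exists x (R : V -> Prop) : (exists r, R r) -> convex R ->
  exists p, R p /\ forall r, R r -> interval x p r.
Proof.
case=> r0 Rr0 convex.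
have [_ [[p [Rp <-]] pmin]] := ex_min_nat (ex_intro (fun n => exists r, R r /\ dist x r = n)
                                   _ (ex_intro _ r0 (conj Rr0 erefl))).
exists p; split=> // r Rr; have [m [xmp pmr xmr]] := median_exists x p r.
have Rm : R m := convex _ _ _ Rp Rr pmr.
have := pmin _ (ex_intro _ m (conj Rm erefl)); move: xmp; rewrite /interval => xmp le.
by have /dist_eq0 <- : dist m p = 0 by lia.
Qed.

Lemma dual_edge_on_side A B u v : is_hyperplane adj A -> is_hyperplane adj B ->
  ~ separates adj B u v -> separates adj A u v ->
  exists s1 s2, [/\ adj s1 s2, separates adj A s1 s2, ~ separates adj B u s1 &
                   ~ separates adj B u s2].
Proof.
move=> hA hB; move En: (dist u v) => n; elim: n u En => [|n IH] u En nBuv Auv.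
  by move: Auv; rewrite (dist_eq0 En) => /(separates_irrefl hA).
have [u' [uu' w]] := walkS_inv (eq_ind _ _ (dist_walk u v) _ En).
have u'v : dist u' v = n.
  by have := dist_min w; have := dist_triangle u u' v; rewrite (dist_adj uu'); lia.
have uu'v : interval u u' v by rewrite /interval (dist_adj uu'); lia.
have [nBuu' nBu'v] := interval_not_separated uu'v hB nBuv.
have [Auu'|nAuu'] := classic (separates adj A u u').
  by exists u, u'; split=> //; apply: separates_irrefl.
have [|s1 [s2 [s12 As12 nB1 nB2]]] := IH u' u'v nBu'v; first by move: Auv nAuu'; by_sides hA.
by exists s1, s2; split=> //; move: nBuu' nB1 nB2; by_sides hB.
Qed.

Definition transverse (A B : V -> V -> Prop) := exists u v w t,
  [/\ separates adj A u v /\ ~ separates adj B u v,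
      ~ separates adj A u w /\ separates adj B u w
    & separates adj A u t /\ separates adj B u t].

(* Walk from the A-edge s1s2 on the u-side of B to an A-edge on the other side
   through a chain of squares; where the chain crosses B a square spans a
   corner of A and B. *)

Lemma transverse_square A B : is_hyperplane adj A -> is_hyperplane adj B -> transverse A B ->
  exists p q r, [/\ spans adj p q r, A = hyperplane_of adj (p, q) & B = hyperplane_of adj (p, r)].
Proof.
move=> hA hB [u [v [w [t [[Auv nBuv] [nAuw Buw] [Aut But]]]]]].
have [s1 [s2 [s12 As12 nBs1 nBs2]]] := dual_edge_on_side hA hB nBuv Auv.
have [||t1 [t2 [t12 At12 nBt1 nBt2]]] := dual_edge_on_side (u := w) (v := t) hA hB;
  [by move: Buw But; by_sides hB | by move: nAuw Aut; by_sides hA |].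
have [Bt1 Bt2] : separates adj B u t1 /\ separates adj B u t2.
  by move: Buw nBt1 nBt2; by_sides hB.
have EA := separating_edge_hyperplane hA s12 As12.
have dual_t : hyperplane_of adj (s1, s2) t1 t2.
  by rewrite -EA (separating_edge_hyperplane hA t12 At12); split=> //; apply: rst_refl.
have [f [s_f Bf]] : exists f, opar adj (s1, s2) f /\ separates adj B u f.1.
  case: (hyperplane_of_crosses s12 dual_t) => [[h1 h2]|[h1 h2]].
  + by exists (t1, t2); split=> //; apply: crossing_edge_opar.
  + by exists (t2, t1); split=> //; apply: crossing_edge_opar (adj_sym t12) _ _.
have [[p q] [[r s] [s_pq pqrs nBp Br]]] :=
  clos_rst_change_step (P := fun e => ~ separates adj B u e.1) s_f (rst_refl _ _ _)
    (fun same => proj1 same nBs1 Bf).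
rewrite /= in nBp Br.
have Bpr : separates adj B p r by move: nBp Br; by_sides hB.
have EA' : A = hyperplane_of adj (p, q) by rewrite EA; apply/hyperplane_of_upar/opar_upar.
exists p, q, r; case: pqrs => [[pq rs pr qs [ps qr]]|[rs pq rp sq [rq sp]]].
- split=> //; last exact: separating_edge_hyperplane hB pr Bpr.
  by split=> //; exists s; split=> //; split=> // e; apply: ps; rewrite e.
- have pr := adj_sym rp; split=> //; last exact: separating_edge_hyperplane hB pr Bpr.
  by split=> //; [move=> e; subst | exists s; split; [apply: adj_sym|]].
Qed.


Lemma halfspace_eq a b c d : adj a b -> adj c d ->
  hyperplane_of adj (a, b) = hyperplane_of adj (c, d) -> halfspace a b c ->
  forall z, halfspace a b z <-> halfspace c d z.
Proof.
move=> ab cd E hc z; have [hcc _] := halfspace_edge cd.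
have := separatesE z c ab; rewrite E (separatesE z c cd).
by case: (classic (halfspace a b z)); case: (classic (halfspace c d z)); tauto.
Qed.

(* [hyp_image g n] is [himg (iter n g)]; the general form also covers [iter n ginv]. *)
Definition himg (phi : V -> V) (J : V -> V -> Prop) : V -> V -> Prop :=
  fun x y => exists a b, J a b /\ x = phi a /\ y = phi b.

Lemma himg_inj phi J1 J2 : injective phi -> himg phi J1 = himg phi J2 -> J1 = J2.
Proof.
move=> inj E; apply: functional_extensionality => a; apply: functional_extensionality => b.
have himgE K : himg phi K (phi a) (phi b) <-> K a b.
  by split=> [[a' [b' [K' [/inj -> /inj ->]]]] | Kab] //; exists a, b.
by apply: propositional_extensionality; rewrite -himgE E himgE.
Qed.

Lemma himg_comp phi psi J : himg phi (himg psi J) = himg (phi \o psi) J.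
Proof.
apply: functional_extensionality => x; apply: functional_extensionality => y.
apply: propositional_extensionality; split.
- by case=> a [b [[a' [b' [J' [-> ->]]]] [-> ->]]]; exists a', b'.
- by case=> a [b [Jab [-> ->]]]; exists (psi a), (psi b); split=> //; exists a, b.
Qed.

Lemma himg_id phi J : phi =1 id -> himg phi J = J.
Proof.
move=> phiE; apply: functional_extensionality => x; apply: functional_extensionality => y.
apply: propositional_extensionality; split=> [[a [b [Jab [-> ->]]]]|Jxy]; rewrite ?phiE //.
by exists x, y; rewrite !phiE.
Qed.

Lemma walk_map f : (forall x y, adj x y -> adj (f x) (f y)) ->
  forall x y n, walk adj x y n -> walk adj (f x) (f y) n.
Proof. by move=> f_adj x y n; elim=> [a|a b c k /f_adj ab _]; [apply: walk0 | apply: walkS]. Qed.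

Lemma upar_map f : injective f -> (forall x y, adj x y -> adj (f x) (f y)) ->
  forall e e', upar adj e e' -> upar adj (f e.1, f e.2) (f e'.1, f e'.2).
Proof.
move=> inj f_adj e e'; elim=> {e e'} [e e' [ee'|->]|e|e e' _ IH|e e' e'' _ IH1 _ IH2].
- case: e e' ee' => p q [r s]; rewrite /ostep /= => -[pq rs pr qs [ps qr]].
  apply: rst_step; left.
  by split; try exact: f_adj; split=> /inj.
- by apply: rst_step; right.
- exact: rst_refl.
- exact: rst_sym.
- exact: rst_trans IH2.
Qed.

Section Automorphism.
Variables phi psi : V -> V.
Hypotheses (phiK : cancel phi psi) (psiK : cancel psi phi).
Hypothesis phi_adj : forall x y, adj x y <-> adj (phi x) (phi y).

Let psi_adj x y : adj x y <-> adj (psi x) (psi y).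
Proof. by rewrite (phi_adj (psi x)) !psiK. Qed.

Lemma dist_auto x y : dist (phi x) (phi y) = dist x y.
Proof.
have := dist_min (walk_map (fun u v => proj1 (phi_adj u v)) (dist_walk x y)).
have := dist_min (walk_map (fun u v => proj1 (psi_adj u v)) (dist_walk (phi x) (phi y))).
by rewrite !phiK; lia.
Qed.

Lemma halfspace_auto a b z : halfspace (phi a) (phi b) (phi z) <-> halfspace a b z.
Proof. by rewrite /halfspace !dist_auto. Qed.

Lemma himg_hyperplane_of a b :
  himg phi (hyperplane_of adj (a, b)) = hyperplane_of adj (phi a, phi b).
Proof.
have up_phi := upar_map (can_inj phiK) (fun u v => proj1 (phi_adj u v)).
have up_psi := upar_map (can_inj psiK) (fun u v => proj1 (psi_adj u v)).
apply: functional_extensionality => x; apply: functional_extensionality => y.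
apply: propositional_extensionality; split.
- case=> a' [b' [[ab' up] [-> ->]]].
  by split; [apply: (proj1 (phi_adj _ _)) | apply: up_phi up].
- case=> xy /up_psi /= up; rewrite !phiK in up.
  exists (psi x), (psi y); rewrite !psiK; split=> //.
  by split=> //; apply: (proj1 (psi_adj _ _)).
Qed.

Lemma himg_is_hyperplane J : is_hyperplane adj J -> is_hyperplane adj (himg phi J).
Proof. by case=> a [b [ab ->]]; exists (phi a), (phi b); rewrite himg_hyperplane_of -phi_adj. Qed.

Lemma separates_himg J u v : is_hyperplane adj J ->
  separates adj (himg phi J) (phi u) (phi v) <-> separates adj J u v.
Proof.
case=> a [b [ab ->]]; have ab' := proj1 (phi_adj a b) ab.
by rewrite himg_hyperplane_of !separatesE // !halfspace_auto.
Qed.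

End Automorphism.

Section Translation.
Variable g : V -> V.
Hypotheses (Hg : automorphism adj g) (Hcosp : cospecial adj g).

Definition ginv : V -> V :=
  let: exist h _ := constructive_indefinite_description _
    (match Hg with conj (Bijective h gK hK) _ => ex_intro _ h (conj gK hK) end) in h.

Lemma ginvP : cancel g ginv /\ cancel ginv g.
Proof. by rewrite /ginv; case: constructive_indefinite_description. Qed.

Lemma iter_gK n : cancel (iter n g) (iter n ginv).
Proof. by elim: n => [|n IH] x //; rewrite [iter n.+1 ginv _]iterSr iterS (proj1 ginvP). Qed.

Lemma iter_ginvK n : cancel (iter n ginv) (iter n g).
Proof. by elim: n => [|n IH] x //; rewrite [iter n.+1 g _]iterSr iterS (proj2 ginvP). Qed.

Lemma iter_g_adj n x y : adj x y <-> adj (iter n g x) (iter n g y).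
Proof. by elim: n => [|n IH] //=; rewrite IH; case: Hg. Qed.

Lemma g_adj x y : adj x y <-> adj (g x) (g y). Proof. exact: (iter_g_adj 1). Qed.

Lemma iter_ginv_adj n x y : adj x y <-> adj (iter n ginv x) (iter n ginv y).
Proof. by rewrite (iter_g_adj n (iter n ginv x)) !iter_ginvK. Qed.

Lemma dist_iter_g n x y : dist (iter n g x) (iter n g y) = dist x y.
Proof. exact: (dist_auto (iter_gK n) (iter_ginvK n) (iter_g_adj n) x y). Qed.

Lemma separates_hyp_image n J u v : is_hyperplane adj J ->
  separates adj (hyp_image g n J) (iter n g u) (iter n g v) <-> separates adj J u v.
Proof. exact: (separates_himg (iter_gK n) (iter_ginvK n) (iter_g_adj n) u v). Qed.

Lemma is_hyperplane_hyp_image n J : is_hyperplane adj J -> is_hyperplane adj (hyp_image g n J).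
Proof. exact: (himg_is_hyperplane (iter_gK n) (iter_ginvK n) (iter_g_adj n)). Qed.

Lemma hyp_image_hyperplane_of n a b :
  hyp_image g n (hyperplane_of adj (a, b)) = hyperplane_of adj (iter n g a, iter n g b).
Proof. exact: (himg_hyperplane_of (iter_gK n) (iter_ginvK n) (iter_g_adj n) a b). Qed.

Lemma hyp_image0 J : hyp_image g 0 J = J.
Proof. exact: himg_id. Qed.

Lemma hyp_imageD m n J : hyp_image g (m + n) J = hyp_image g m (hyp_image g n J).
Proof.
change (himg (iter (m + n) g) J = himg (iter m g) (himg (iter n g) J)); rewrite himg_comp.
by congr himg; apply: functional_extensionality => x; apply: iterD.
Qed.

Lemma hyp_image_inj n J1 J2 : hyp_image g n J1 = hyp_image g n J2 -> J1 = J2.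
Proof. exact: himg_inj (can_inj (iter_gK n)). Qed.

Lemma hyp_imageK n J : hyp_image g n (himg (iter n ginv) J) = J.
Proof.
change (himg (iter n g) (himg (iter n ginv) J) = J); rewrite himg_comp.
by apply: himg_id => x; apply: iter_ginvK.
Qed.

Lemma same_orbit_image n J : same_orbit_hyp g J (hyp_image g n J).
Proof. by exists n; left. Qed.

Lemma same_orbit_sym J K : same_orbit_hyp g J K -> same_orbit_hyp g K J.
Proof. by case=> n [E|E]; exists n; [right | left]. Qed.

Lemma same_orbit_trans A B C :
  same_orbit_hyp g A B -> same_orbit_hyp g B C -> same_orbit_hyp g A C.
Proof.
case=> a [->|->] [b [->|E]].
- by rewrite -hyp_imageD; apply: same_orbit_image.
- have [le_ab|lt_ba] := leqP a b.
    by exists (b - a); right; apply: (@hyp_image_inj a); rewrite E -hyp_imageD subnKC.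
  exists (a - b); left; apply: (@hyp_image_inj b).
  by rewrite -E -hyp_imageD subnKC // ltnW.
- have [le_ab|lt_ba] := leqP a b.
    by exists (b - a); left; rewrite -hyp_imageD subnK.
  by exists (a - b); right; rewrite -hyp_imageD subnK // ltnW.
- by exists (a + b); right; rewrite E hyp_imageD.
Qed.

Lemma separating_not_invariant J x : is_hyperplane adj J -> separates adj J x (g x) ->
  hyp_image g 1 J <> J.
Proof.
case=> a [b [ab ->]] sep inv; have gab := proj1 (g_adj a b) ab.
have E : hyperplane_of adj (a, b) = hyperplane_of adj (g a, g b).
  by rewrite -{1}inv (hyp_image_hyperplane_of 1).
have dual : hyperplane_of adj (a, b) (g a) (g b).
  by split=> //; apply: hyperplane_of_eq_upar gab E.
case: (hyperplane_of_crosses ab dual) => /= [[ha _]|[nha hb]].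
- move: sep; rewrite separatesE // (halfspace_eq ab gab E ha (g x)).
  by rewrite (halfspace_auto (proj1 ginvP) (proj2 ginvP) g_adj); tauto.
- case: Hcosp => two_sided _ _ _; apply: (two_sided a b 1 ab); apply: rst_sym.
  exact: opar_rev (crossing_edge_opar ab (adj_sym gab) hb nha).
Qed.

Lemma same_orbit_not_transverse A B : is_hyperplane adj A -> is_hyperplane adj B ->
  same_orbit_hyp g A B -> ~ transverse A B.
Proof.
move=> hA hB [n AB] /(transverse_square hA hB) [p [q [r [pqr EA EB]]]].
have [pq pr _ _] := pqr; case: Hcosp => _ no_self_int _ _; apply: (no_self_int p q r pqr).
exists n; rewrite EA EB !hyp_image_hyperplane_of in AB.
case: AB => /esym E; [left | right]; exact: hyperplane_of_eq_upar E.
Qed.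

Lemma interval_g x m y : interval x m y -> interval (g x) (g m) (g y).
Proof. by rewrite /interval !(dist_iter_g 1). Qed.

Definition min_displaced z := forall w, dist z (g z) <= dist w (g w).

Lemma in_Min_min_displaced z : in_Min adj g z -> min_displaced z.
Proof. by case=> n [/is_distE -> nmin] w; apply/nmin/dist_spec. Qed.

Lemma min_displaced_iter n z : min_displaced z -> min_displaced (iter n g z).
Proof. by move=> zmin; elim: n => [|n IH] //= w; rewrite (dist_iter_g 1). Qed.

(* With c the median of x, gx, g^2x, Sep(c|gc) is contained in Sep(gx|g^2x),
   and minimality of x makes the two equal. *)
Lemma separates_far_of_next x J : min_displaced x -> is_hyperplane adj J ->
  separates adj J (g x) (g (g x)) -> separates adj J x (g (g (g x))).
Proof.
move=> xmin hJ sepJ; have [c [xc gxc x2c]] := median_exists x (g x) (g (g x)).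
have c_next K : is_hyperplane adj K -> separates adj K c (g c) ->
                separates adj K (g x) (g (g x)).
  move=> hK sepK; apply: NNPP => nsep.
  have [nK1 _] := interval_not_separated gxc hK nsep.
  have [nK2 _] := interval_not_separated (interval_g xc) hK nsep.
  by move: sepK nK1 nK2; by_sides hK.
have c_far K : is_hyperplane adj K -> separates adj K c (g c) ->
               separates adj K x (g (g (g x))).
  move=> hK sepK; have sep12 := c_next K hK sepK; apply: NNPP => nsep03.
  have [sep01|nsep01] := classic (separates adj K x (g x)).
  - have nsep02 : ~ separates adj K x (g (g x)) by move: sep01 sep12; by_sides hK.
    have nsep23 : ~ separates adj K (g (g x)) (g (g (g x))).
      by move: sep01 sep12 nsep03; by_sides hK.
    have [nK1 _] := interval_not_separated x2c hK nsep02.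
    have [nK2 _] := interval_not_separated (interval_g gxc) hK nsep23.
    by move: sepK nsep02 nK1 nK2; by_sides hK.
  - have [nK1 _] := interval_not_separated xc hK nsep01.
    have nsep13 : ~ separates adj K (g x) (g (g (g x))) by move: nsep01 nsep03; by_sides hK.
    have [nK2 _] := interval_not_separated (interval_g x2c) hK nsep13.
    by move: sepK nsep01 nK1 nK2; by_sides hK.
apply: c_far => //; apply: separating_subset_eq c_next _ J hJ sepJ.
by rewrite (dist_iter_g 1); apply: xmin.
Qed.

Definition orbit_list Y p := List.map (hyp_image g^~ Y) (List.seq 0 p).

Lemma orbit_listP Y p K : List.In K (orbit_list Y p) <-> exists2 m, m < p & K = hyp_image g m Y.
Proof.
rewrite List.in_map_iff; split=> [[m [<- /List.in_seq lt_mp]]|[m lt_mp ->]].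
  by exists m => //; apply/ltP; lia.
by exists m; split=> //; apply/List.in_seq; move/ltP: lt_mp; lia.
Qed.

Lemma length_orbit_list Y p : length (orbit_list Y p) = p.
Proof. by rewrite List.length_map List.length_seq. Qed.

Definition double_sep x K :=
  [/\ is_hyperplane adj K, separates adj K x (g x) & separates adj K (g x) (g (g x))].

Lemma double_sep_g x K : min_displaced x -> double_sep x K -> double_sep x (hyp_image g 1 K).
Proof.
move=> xmin [hK sep01 sep12]; have hgK := is_hyperplane_hyp_image 1 hK.
have gsep12 := proj2 (separates_hyp_image 1 x (g x) hK) sep01.
have gsep23 := proj2 (separates_hyp_image 1 (g x) (g (g x)) hK) sep12.
have gsep03 := separates_far_of_next xmin hgK gsep12.
by split=> //; move: gsep12 gsep23 gsep03; by_sides hgK.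
Qed.

Lemma double_sep_periodic x H : min_displaced x -> double_sep x H ->
  exists Y p, [/\ 0 < p, hyp_image g p Y = Y & forall m, double_sep x (hyp_image g m Y)].
Proof.
move=> xmin sepH.
have orbit j : double_sep x (hyp_image g j H).
  by elim: j => [|j IH]; [rewrite hyp_image0 | rewrite (hyp_imageD 1); apply: double_sep_g].
have [i [j [lt_ij Eij]]] : exists i j, i < j /\ hyp_image g i H = hyp_image g j H.
  apply: NNPP => distinct.
  have nd : List.NoDup (orbit_list H (dist x (g x)).+1).
    by apply: nodup_map_iota => i j lt_ij _ E; apply: distinct; exists i, j.
  suff /(separating_length_le nd) : forall K, List.In K (orbit_list H (dist x (g x)).+1) ->
      is_hyperplane adj K /\ (separates adj K x (g x) \/ separates adj K x x).
    by rewrite length_orbit_list dist0 addn0 ltnn.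
  by move=> K /orbit_listP [k _ ->]; have [hK sepK _] := orbit k; split=> //; left.
exists (hyp_image g i H), (j - i); split; first by rewrite subn_gt0.
  by rewrite -hyp_imageD subnK ?Eij // ltnW.
by move=> m; rewrite -hyp_imageD.
Qed.

Definition side_le x K1 K2 := forall z, ~ separates adj K1 z x -> ~ separates adj K2 z x.

Lemma side_le_total x K1 K2 : is_hyperplane adj K1 -> is_hyperplane adj K2 ->
  same_orbit_hyp g K1 K2 -> separates adj K1 x (g x) -> separates adj K2 x (g x) ->
  side_le x K1 K2 \/ side_le x K2 K1.
Proof.
move=> hK1 hK2 orb sep1 sep2; apply: NNPP => incomparable.
have witness A B : ~ side_le x A B -> exists z, ~ separates adj A z x /\ separates adj B z x.
  by move=> nle; apply: NNPP => nz; apply: nle => z nA sB; apply: nz; exists z.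
have [z1 [nK1 K2z1]] := witness K1 K2 (fun le => incomparable (or_introl le)).
have [z2 [nK2 K1z2]] := witness K2 K1 (fun le => incomparable (or_intror le)).
apply: (same_orbit_not_transverse hK1 hK2 orb); exists x, z2, z1, (g x).
move: (separatesC x z1 hK1) (separatesC x z1 hK2) (separatesC x z2 hK1) (separatesC x z2 hK2).
by split; split=> //; tauto.
Qed.

Lemma side_le_g x K1 K2 : is_hyperplane adj K1 -> is_hyperplane adj K2 ->
  separates adj (hyp_image g 1 K1) x (g x) -> separates adj (hyp_image g 1 K2) x (g x) ->
  side_le x K1 K2 -> side_le x (hyp_image g 1 K2) (hyp_image g 1 K1).
Proof.
move=> hK1 hK2 gsep1 gsep2 le z nK2z.
have hgK1 := is_hyperplane_hyp_image 1 hK1; have hgK2 := is_hyperplane_hyp_image 1 hK2.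
have zE : z = g (ginv z) by rewrite (proj2 ginvP).
have sep2z : separates adj (hyp_image g 1 K2) z (g x) by move: gsep2 nK2z; by_sides hgK2.
rewrite zE (separates_hyp_image 1 _ _ hK2) in sep2z.
have /(separates_hyp_image 1 _ _ hK1) sep1z : separates adj K1 (ginv z) x.
  by apply: NNPP => /le; apply.
by move: gsep1 sep1z; rewrite /= -zE; by_sides hgK1.
Qed.

Section PeriodicOrbit.
Variables (Y : V -> V -> Prop) (p : nat).
Hypotheses (p_gt0 : 0 < p) (Yp : hyp_image g p Y = Y).

Lemma orbit_list_g K : List.In K (orbit_list Y p) -> List.In (hyp_image g 1 K) (orbit_list Y p).
Proof.
case/orbit_listP=> m lt_mp ->; apply/orbit_listP; rewrite -hyp_imageD.
have [lt_m1p|] := ltnP m.+1 p; first by exists m.+1.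
by exists 0 => //; rewrite hyp_image0 (_ : 1 + m = p) //; lia.
Qed.

Lemma orbit_list_ginv K :
  List.In K (orbit_list Y p) -> exists2 K', List.In K' (orbit_list Y p) & hyp_image g 1 K' = K.
Proof.
case/orbit_listP=> [[|m]] lt_mp ->.
  exists (hyp_image g p.-1 Y); first by apply/orbit_listP; exists p.-1 => //; lia.
  by rewrite -hyp_imageD (_ : 1 + p.-1 = p) ?hyp_image0 //; lia.
by exists (hyp_image g m Y); [apply/orbit_listP; exists m => //; lia | rewrite -hyp_imageD].
Qed.

Variable x : V.
Hypothesis Ysep : forall m, double_sep x (hyp_image g m Y).

(* Translates do not cross, so their x-sides are totally ordered by inclusion,
   and g reverses this order: g maps a least element Y0 of the finite orbit to
   a greatest one and g^2 Y0 back to a least one. *)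
Lemma periodic_orbit_flip : exists Y0,
  [/\ is_hyperplane adj Y0, separates adj Y0 x (g x), separates adj (hyp_image g 1 Y0) x (g x),
      hyp_image g 2 Y0 = Y0 & side_le x Y0 (hyp_image g 1 Y0)].
Proof.
have Osep K : List.In K (orbit_list Y p) -> is_hyperplane adj K /\ separates adj K x (g x).
  by case/orbit_listP=> m _ ->; have [] := Ysep m.
have Ototal K1 K2 : List.In K1 (orbit_list Y p) -> List.In K2 (orbit_list Y p) ->
                    side_le x K1 K2 \/ side_le x K2 K1.
  move=> in1 in2; have [[h1 s1] [h2 s2]] := (Osep K1 in1, Osep K2 in2).
  apply: side_le_total => //; case/orbit_listP: in1 => m1 _ ->; case/orbit_listP: in2 => m2 _ ->.
  exact: same_orbit_trans (same_orbit_sym (same_orbit_image m1 Y)) (same_orbit_image m2 Y).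
have Orev K1 K2 : List.In K1 (orbit_list Y p) -> List.In K2 (orbit_list Y p) ->
                  side_le x K1 K2 -> side_le x (hyp_image g 1 K2) (hyp_image g 1 K1).
  move=> in1 in2; apply: side_le_g; try exact: (Osep _ in1).1; try exact: (Osep _ in2).1.
  - exact: (Osep _ (orbit_list_g in1)).2.
  - exact: (Osep _ (orbit_list_g in2)).2.
have Y_in : List.In Y (orbit_list Y p) by apply/orbit_listP; exists 0; rewrite ?hyp_image0.
have [Y0 [inY0 Y0min]] :=
  list_least Y_in Ototal (fun _ _ _ le12 le23 z => le23 z \o le12 z) (fun _ _ => id).
have Y2E : hyp_image g 2 Y0 = hyp_image g 1 (hyp_image g 1 Y0) := hyp_imageD 1 1 Y0.
have inY1 := orbit_list_g inY0; have inY2 := orbit_list_g inY1; rewrite -Y2E in inY2.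
have Y1max K : List.In K (orbit_list Y p) -> side_le x K (hyp_image g 1 Y0).
  by case/orbit_list_ginv=> K' inK' <-; apply: Orev (Y0min K' inK').
have Y2min K : List.In K (orbit_list Y p) -> side_le x (hyp_image g 2 Y0) K.
  by case/orbit_list_ginv=> K' inK' <-; rewrite Y2E; apply: Orev (Y1max K' inK').
have [hY0 sY0] := Osep _ inY0; have [hY1 sY1] := Osep _ inY1.
have Y20 : hyp_image g 2 Y0 = Y0.
  have [hY2 _] := Osep _ inY2.
  apply: hyperplane_eq_sides hY2 hY0 _ => z; split=> sep; apply: NNPP.
  - by move/(Y0min _ inY2 z).
  - by move/(Y2min _ inY0 z).
by exists Y0; split=> //; apply: Y0min.
Qed.

End PeriodicOrbit.

(* For the gate p of R, x-p-gp and gx-gp-p are geodesic, so Sep(p|gp) is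
   contained in Sep(x|gx), and minimality of x gives equality. *)
Lemma min_sep_invariant_convex x (R : V -> Prop) : min_displaced x ->
  (exists r, R r) -> (forall z, R z <-> R (g z)) -> convex R ->
  exists2 p, R p & forall K, is_hyperplane adj K ->
    separates adj K x (g x) -> separates adj K p (g p).
Proof.
move=> xmin Rne Rg convR; have [p [Rp gate]] := gate_exists x Rne convR.
have Rgp := (Rg p).1 Rp.
have gate_g r : R r -> interval (g x) (g p) r.
  move=> Rr; have := interval_g (gate (ginv r) (proj2 (Rg _) _)); rewrite (proj2 ginvP); exact.
exists p => //; apply: separating_subset_eq; last exact: xmin.
move=> K hK sepK; have once1 := interval_separates_once (gate _ Rgp) hK.
have once2 := interval_separates_once (gate_g _ Rp) hK.
by move: sepK once1 once2; by_sides hK.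
Qed.

Lemma no_flip_pair x Y0 : min_displaced x -> is_hyperplane adj Y0 -> separates adj Y0 x (g x) ->
  separates adj (hyp_image g 1 Y0) x (g x) -> hyp_image g 2 Y0 = Y0 ->
  side_le x Y0 (hyp_image g 1 Y0) -> False.
Proof.
set Y1 := hyp_image g 1 Y0 => xmin hY0 s0 s1 Y20 le01.
have hY1 : is_hyperplane adj Y1 := is_hyperplane_hyp_image 1 hY0.
have [E|neq] := classic (Y1 = Y0); first exact: separating_not_invariant hY0 s0 E.
pose R z := ~ separates adj Y1 z x /\ separates adj Y0 z x.
have [Rne|noR] := classic (exists z, R z); last first.
  apply/neq/(hyperplane_eq_sides (x := x) hY1 hY0) => z.
  by split=> sep; apply: NNPP => nsep; [apply: (le01 z nsep) | apply: noR; exists z].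
have Rg z : R z <-> R (g z).
  have F0 := separates_hyp_image 1 z x hY0; have F1 := separates_hyp_image 1 z x hY1.
  rewrite -(hyp_imageD 1 1) Y20 in F1; rewrite -/Y1 /= in F0 F1.
  have G1 : separates adj Y1 (g z) x <-> ~ separates adj Y1 (g z) (g x).
    by move: s1; by_sides hY1.
  have G0 : separates adj Y0 (g z) x <-> ~ separates adj Y0 (g z) (g x).
    by move: s0; by_sides hY0.
  by rewrite /R; tauto.
have convR : convex R.
  move=> z1 z2 w [nY1 Y0z1] [nY1' Y0z2] z1wz2; split.
  - have [nsep _] := interval_not_separated z1wz2 hY1 (ltac:(move: nY1 nY1'; by_sides hY1)).
    by move: nY1 nsep; by_sides hY1.
  - have [nsep _] := interval_not_separated z1wz2 hY0 (ltac:(move: Y0z1 Y0z2; by_sides hY0)).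
    by move: Y0z1 nsep; by_sides hY0.
have [p Rp /(_ Y0 hY0 s0) sepp] := min_sep_invariant_convex xmin Rne Rg convR.
have [[_ Y0p] [_ Y0gp]] := (Rp, (Rg p).1 Rp).
by move: Y0p Y0gp sepp; by_sides hY0.
Qed.

Lemma min_not_double_sep x H : min_displaced x -> is_hyperplane adj H ->
  separates adj H x (g x) -> ~ separates adj H (g x) (g (g x)).
Proof.
move=> xmin hH s01 s12.
have [Y [p [p_gt0 Yp Ysep]]] := double_sep_periodic xmin (And3 hH s01 s12).
have [Y0 [hY0 s0 s1 Y20 le01]] := periodic_orbit_flip p_gt0 Yp Ysep.
exact: no_flip_pair xmin hY0 s0 s1 Y20 le01.
Qed.

Lemma translate_nested x H : min_displaced x -> is_hyperplane adj H ->
  separates adj H x (g x) ->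
  forall z, ~ separates adj (hyp_image g 1 H) z (g (g x)) -> ~ separates adj H z (g x).
Proof.
move=> xmin hH s01 z nz sz; have hgH := is_hyperplane_hyp_image 1 hH.
have gs12 := proj2 (separates_hyp_image 1 x (g x) hH) s01.
have ns12 := min_not_double_sep xmin hH s01.
have ngs01 : ~ separates adj (hyp_image g 1 H) x (g x).
  by move=> gs01; apply: min_not_double_sep xmin hgH gs01 gs12.
apply: (same_orbit_not_transverse hH hgH (same_orbit_image 1 H)); exists (g x), x, (g (g x)), z.
split; split=> //.
- by move: s01; by_sides hH.
- by move: ngs01; by_sides hgH.
- by move: sz; by_sides hH.
- by move: nz gs12; by_sides hgH.
Qed.

Lemma translate_not_separated_later x H : min_displaced x -> is_hyperplane adj H ->
  separates adj H x (g x) -> forall k, ~ separates adj H (iter k.+1 g x) (g x).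
Proof.
move=> xmin hH s01; elim=> [|k IH]; first exact: separates_irrefl.
apply: translate_nested => //; rewrite [iter _ g x]iterS.
by move/(separates_hyp_image 1 _ _ hH).
Qed.

Lemma separates_unique_step x J i j : min_displaced x -> is_hyperplane adj J -> i < j ->
  separates adj J (iter i g x) (iter i.+1 g x) ->
  ~ separates adj J (iter j g x) (iter j.+1 g x).
Proof.
move=> xmin hJ lt_ij sep_i; set xi := iter i g x; rewrite iterS -/xi in sep_i.
have later := translate_not_separated_later (min_displaced_iter i xmin) hJ sep_i.
have -> : iter j g x = iter (j - i - 1).+1 g xi.
  by rewrite /xi -iterD; congr (iter _ g x); lia.
have -> : iter j.+1 g x = iter (j - i).+1 g xi.
  by rewrite /xi -iterD; congr (iter _ g x); lia.
by move: (later (j - i - 1)) (later (j - i)); by_sides hJ.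
Qed.

Lemma translate_not_separating z H k : min_displaced z -> is_hyperplane adj H ->
  separates adj H z (g z) -> 0 < k -> ~ separates adj (hyp_image g k H) z (g z).
Proof.
move=> zmin hH sepH k_gt0 sep0.
apply: (separates_unique_step zmin (is_hyperplane_hyp_image k hH) k_gt0 sep0).
by rewrite iterSr; apply/separates_hyp_image.
Qed.

Lemma translates_separating x H : min_displaced x -> is_hyperplane adj H ->
  separates adj H x (g x) ->
  forall i n, separates adj (hyp_image g i H) x (iter n g x) <-> i < n.
Proof.
move=> xmin hH sepH i; have hiH := is_hyperplane_hyp_image i hH.
have step m : separates adj (hyp_image g i H) (iter m g x) (iter m.+1 g x) <-> m = i.
  split=> [sep_m|->]; last by rewrite iterSr; apply/separates_hyp_image.
  have sep_i : separates adj (hyp_image g i H) (iter i g x) (iter i.+1 g x).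
    by rewrite iterSr; apply/separates_hyp_image.
  case: (ltngtP i m) => // [lt_im|lt_mi].
  - by case: (separates_unique_step xmin hiH lt_im sep_i).
  - by case: (separates_unique_step xmin hiH lt_mi sep_m).
elim=> [|n IH]; first by split=> // /(separates_irrefl hiH).
rewrite (separates_xor x (iter n g x) (iter n.+1 g x) hiH) IH step ltnS leq_eqVlt.
by case: (ltngtP i n) => [lt_in|lt_ni|->]; split; try lia; move=> [/eqP|].
Qed.

Lemma orbit_separates_step y K n : is_hyperplane adj K -> separates adj K y (iter n g y) ->
  exists K', same_orbit_hyp g K K' /\ is_hyperplane adj K' /\ separates adj K' y (g y).
Proof.
move=> hK; elim: n => [|n IH]; first by move/(separates_irrefl hK).
rewrite (separates_xor y (iter n g y) (iter n.+1 g y) hK).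
have [/IH //|nsep xor] := classic (separates adj K y (iter n g y)).
have hK' := himg_is_hyperplane (iter_ginvK n) (iter_gK n) (iter_ginv_adj n) hK.
exists (himg (iter n ginv) K); split; first by exists n; right; rewrite hyp_imageK.
split=> //; apply/(separates_hyp_image n _ _ hK'); rewrite hyp_imageK -iterSr.
by move: nsep xor; by_sides hK.
Qed.

(* The N = 2d(x,y)+1 distinct translates g^i H, i < N, all separate x from
   g^N x; if no translate were in Sep(y|gy), none would separate y from g^N y,
   so each would separate x from y or g^N x from g^N y, which only 2d(x,y)
   hyperplanes do. *)
Lemma orbit_meets_Sep x y H : min_displaced x -> is_hyperplane adj H ->
  separates adj H x (g x) ->
  exists K, same_orbit_hyp g H K /\ is_hyperplane adj K /\ separates adj K y (g y).
Proof.
move=> xmin hH sepH; apply: NNPP => noK.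
have hiH i := is_hyperplane_hyp_image i hH.
have transl := translates_separating xmin hH sepH.
set N := (dist x y).*2.+1.
have nd : List.NoDup (orbit_list H N).
  apply: nodup_map_iota => i j lt_ij _ E.
  by have := proj2 (transl i i.+1) (ltnSn i); rewrite E transl ltnNge lt_ij.
suff /(separating_length_le nd) : forall K, List.In K (orbit_list H N) ->
    is_hyperplane adj K /\ (separates adj K x y \/ separates adj K (iter N g x) (iter N g y)).
  by rewrite length_orbit_list dist_iter_g /N addnn ltnn.
move=> K /orbit_listP [i lt_iN ->]; split=> //.
have sepN := proj2 (transl i N) lt_iN.
have nsepN : ~ separates adj (hyp_image g i H) y (iter N g y).
  case/(orbit_separates_step (hiH i))=> K' [orbK' sepK']; apply: noK; exists K'.
  by split=> //; apply: same_orbit_trans (same_orbit_image i H) orbK'.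
by move: sepN nsepN; by_sides (hiH i).
Qed.

Lemma Sep_orbit_unique z H (K1 K2 : Sep adj z (g z)) : min_displaced z ->
  same_orbit_hyp g H (sval K1) -> same_orbit_hyp g H (sval K2) -> sval K1 = sval K2.
Proof.
case: K1 K2 => [K1 [hK1 s1]] [K2 [hK2 s2]] /= zmin o1 o2.
have [[|n] [E|E]] := same_orbit_trans (same_orbit_sym o1) o2; subst; rewrite ?hyp_image0 //.
- by case: (translate_not_separating zmin hK1 s1 (ltn0Sn n) s2).
- by case: (translate_not_separating zmin hK2 s2 (ltn0Sn n) s1).
Qed.

Lemma Sep_val_inj u v (J1 J2 : Sep adj u v) : sval J1 = sval J2 -> J1 = J2.
Proof. by case: J1 J2 => [J1 p1] [J2 p2] /= E; subst; rewrite (proof_irrelevance _ p1 p2). Qed.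

Definition Sep_transport x y (xmin : min_displaced x) (J : Sep adj x (g x)) :
    Sep adj y (g y) :=
  let: exist J' (conj hJ' sepJ') := J in
  let: exist K orbK :=
    constructive_indefinite_description _ (orbit_meets_Sep y xmin hJ' sepJ') in
  exist _ K (proj2 orbK).

Lemma Sep_transport_orbit x y (xmin : min_displaced x) J :
  same_orbit_hyp g (sval J) (sval (Sep_transport y xmin J)).
Proof. by case: J => J [hJ sepJ] /=; case: constructive_indefinite_description => K []. Qed.

End Translation.
End MedianGraph.

Theorem lemma3p4 (V : Type) (adj : V -> V -> Prop) (g : V -> V)
  (HX : median_graph adj) (Hg : automorphism adj g)
  (Hfree : free_action g) (Hcosp : cospecial adj g)
  (x y : V) (Hx : in_Min adj g x) (Hy : in_Min adj g y) :
  exists f : Sep adj x (g x) -> Sep adj y (g y),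
    [/\ bijective f,
        (forall J, same_orbit_hyp g (sval J) (sval (f J))) &
        (forall f' : Sep adj x (g x) -> Sep adj y (g y),
           bijective f' ->
           (forall J, same_orbit_hyp g (sval J) (sval (f' J))) ->
           forall J, sval (f' J) = sval (f J))].
Proof.
have xmin := in_Min_min_displaced HX Hx; have ymin := in_Min_min_displaced HX Hy.
pose f := Sep_transport Hg Hcosp y xmin; pose h := Sep_transport Hg Hcosp x ymin.
have f_orbit := Sep_transport_orbit Hg Hcosp y xmin.
have h_orbit := Sep_transport_orbit Hg Hcosp x ymin.
have unique := Sep_orbit_unique Hg Hcosp.
exists f; split=> // [|f' _ f'_orbit J]; last exact: unique _ _ _ _ ymin (f'_orbit J) (f_orbit J).
exists h => J; apply: Sep_val_inj.
- exact: unique _ _ _ _ xmin (h_orbit (f J)) (same_orbit_sym (f_orbit J)).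
- exact: unique _ _ _ _ ymin (f_orbit (h J)) (same_orbit_sym (h_orbit J)).
Qed.
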